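(* If $n\ge 8$ and $S=\{x_1,\dots,x_n\}$ is an $(n-7)$-fold GCD closed set of distinct positive integers, then the LCM matrix $[S]$ is nonsingular.
   Context: Let $T$ be a set of $n$ distinct positive integers and $r\in[1,n-1]$ an integer. $T$ is $r$-fold GCD closed if there is a divisor chain $R\subseteq T$ (a set totally ordered by divisibility) with $|R|=r$ such that $\max(R)$ divides $\min(T\setminus R)$ and $T\setminus R$ is GCD closed (i.e. $\gcd(x,y)\in T\setminus R$ for all $x,y\in T\setminus R$). The LCM matrix $[S]$ has $(i,j)$ entry $\mathrm{lcm}(x_i,x_j)$. *)

From mathcomp Require Import all_boot all_order all_algebra.
Set Implicit Arguments. Unset Strict Implicit. Unset Printing Implicit Defensive.
Import GRing.Theory.

(* A finite set of positive integers is represented by a duplicate-free seq nat. *)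

Definition gcd_closed (T : seq nat) : Prop :=
  forall x y, x \in T -> y \in T -> gcdn x y \in T.

Definition divisor_chain (R : seq nat) : Prop :=
  forall x y, x \in R -> y \in R -> (x %| y) || (y %| x).

(* Numerical maximum / minimum of a seq of nats (0 for the empty seq). *)
Definition seqmax (s : seq nat) : nat := \max_(x <- s) x.
Definition seqmin (s : seq nat) : nat := foldr minn (head 0 s) s.

(* T is r-fold GCD closed (T duplicate-free, r in [1, |T|-1]). *)
Definition r_fold_gcd_closed (r : nat) (T : seq nat) : Prop :=
  exists R : seq nat,
    [/\ uniq R /\ {subset R <= T}, size R = r, divisor_chain R,
        (seqmax R %| seqmin (filter (fun x => x \notin R) T))
      & gcd_closed (filter (fun x => x \notin R) T)].

Definition lcm_matrix (n : nat) (x : 'I_n -> nat) : 'M[rat]_n :=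
  \matrix_(i < n, j < n) ((lcmn (x i) (x j))%:R)%R.

From mathcomp Require Import all_boot all_order all_algebra.
From mathcomp Require Import zify lra.
Set Implicit Arguments. Unset Strict Implicit. Unset Printing Implicit Defensive.
Import Order.TTheory GRing.Theory Num.Theory.

(* The LCM matrix is diag(x) [1 / gcd(x_i, x_j)] diag(x).  When S is gcd closed, the
   reciprocal GCD matrix factors as E diag(alpha) E^T, with E the divisibility incidence
   matrix of S and alpha(a) = 1/a - (sum of g(d) over the d dividing some maximal proper
   divisor of a in S), where g is the Moebius inversion of z |-> 1/z.  Hence [S] is
   nonsingular as soon as no alpha(x_k) vanishes.

   An (n-7)-fold gcd-closed set S = R + G is gcd closed, since the chain R divides every
   element of G.  If a in S has at most one maximal proper divisor, alpha(a) is clearly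
   nonzero.  Otherwise a and its maximal proper divisors M lie in G, so M sits inside the
   gcd-closed set of proper divisors of a in G, which has at most 6 elements.  The pairwise
   gcds of M then generate a gcd-closed set disjoint from M, of size at most 6 - |M|; this
   forces an ordering of M in which the gcds of each element with the later ones form a
   chain, and inclusion-exclusion along that ordering shows alpha(a) > 0. *)

(** * Chains, maxima and gcd-closed sets of integers *)

Lemma seqmax_mem s : s != [::] -> seqmax s \in s.
Proof.
rewrite /seqmax; elim: s => // a [|b s] IH _; first by rewrite big_seq1 mem_head.
rewrite big_cons inE /maxn; case: ifP => _; last by rewrite eqxx.
by apply/orP; right; exact: IH.
Qed.

Lemma leq_seqmax s t : t \in s -> t <= seqmax s.
Proof. by move=> ts; apply: (leq_bigmax_seq t). Qed.

Lemma foldr_minn_mem x0 s : foldr minn x0 s \in x0 :: s.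
Proof.
elim: s => [|b s IH] /=; first exact: mem_head.
case: leqP => _; first by rewrite !inE eqxx orbT.
by move: IH; rewrite !inE => /orP[] ->; rewrite ?orbT.
Qed.

Lemma foldr_minn_leq x0 s t : t \in x0 :: s -> foldr minn x0 s <= t.
Proof.
elim: s => [|b s IH] /=; first by rewrite inE => /eqP ->.
rewrite geq_min !inE => /or3P[tx0|/eqP->|ts].
- by rewrite IH ?orbT // inE tx0.
- by rewrite leqnn.
- by rewrite IH ?orbT // inE ts orbT.
Qed.

Lemma seqmin_mem s : s != [::] -> seqmin s \in s.
Proof.
case: s => // a s _; have := foldr_minn_mem a (a :: s).
by rewrite /seqmin inE => /orP[/eqP->|]; rewrite ?mem_head.
Qed.

Lemma seqmin_leq s t : t \in s -> seqmin s <= t.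
Proof. by case: s => // a s ts; apply: foldr_minn_leq; rewrite inE ts orbT. Qed.

Lemma divisor_chain_sub R R' : {subset R <= R'} -> divisor_chain R' -> divisor_chain R.
Proof. by move=> sub chR' u v /sub uR' /sub vR'; apply: chR'. Qed.

Lemma divisor_chain1 u : divisor_chain [:: u].
Proof. by move=> x y; rewrite !inE => /eqP-> /eqP->; rewrite dvdnn. Qed.

Lemma divisor_chain_pair u v : (u %| v) || (v %| u) -> divisor_chain [:: u; v].
Proof.
move=> uv x y; rewrite !inE => /orP[]/eqP-> /orP[]/eqP->; rewrite ?dvdnn //.
by rewrite orbC.
Qed.

Lemma proper_dvdn_double_leq c y : 0 < y -> c %| y -> c != y -> c.*2 <= y.
Proof.
move=> y0 /dvdnP[q yq] cy; subst y; rewrite -mul2n leq_mul2r.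
by case: q y0 cy => [|[|q]] // _; [rewrite mul1n eqxx | rewrite orbT].
Qed.

Lemma dvdn_seqmax s u : 0 < u -> divisor_chain s -> u \in s -> u %| seqmax s.
Proof.
move=> u0 chs us; have smax : seqmax s \in s by apply: seqmax_mem; case: (s) us.
case/orP: (chs _ _ us smax) => // maxu.
suff -> : u = seqmax s by [].
by apply: anti_leq; rewrite leq_seqmax //= dvdn_leq.
Qed.

Lemma seqmin_dvd G v :
  (forall t, t \in G -> 0 < t) -> gcd_closed G -> v \in G -> seqmin G %| v.
Proof.
move=> Gpos Gcl vG; have minG : seqmin G \in G by apply: seqmin_mem; case: (G) vG.
have -> : seqmin G = gcdn (seqmin G) v; last exact: dvdn_gcdr.
apply: anti_leq; rewrite seqmin_leq ?Gcl //.
by rewrite dvdn_leq ?dvdn_gcdl ?Gpos.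
Qed.

Lemma r_fold_gcd_closed_split r T :
  (forall t, t \in T -> 0 < t) -> r_fold_gcd_closed r T ->
  exists R, [/\ {subset R <= T}, size [seq t <- T | t \notin R] + r <= size T,
    divisor_chain R, gcd_closed [seq t <- T | t \notin R]
    & forall u v, u \in R -> v \in [seq t <- T | t \notin R] -> u %| v].
Proof.
move=> Tpos [R [[uR RT] <- chR maxmin Gcl]]; exists R; split => //.
  rewrite size_filter -(count_predC (mem R) T) addnC leq_add2r.
  rewrite -size_filter uniq_leq_size // => u uR'.
  by rewrite mem_filter; apply/andP; split => //; apply: RT.
move=> u v uR' vG.
have Gpos t : t \in [seq t <- T | t \notin R] -> 0 < t.
  by rewrite mem_filter => /andP[_ /Tpos].
apply: dvdn_trans (seqmin_dvd Gpos Gcl vG).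
exact: dvdn_trans (dvdn_seqmax (Tpos u (RT u uR')) chR uR') maxmin.
Qed.

Lemma gcd_closed_chain_below R T :
  {subset R <= T} -> divisor_chain R -> gcd_closed [seq t <- T | t \notin R] ->
  (forall u v, u \in R -> v \in [seq t <- T | t \notin R] -> u %| v) ->
  gcd_closed T.
Proof.
move=> RT chR Gcl RG u v uT vT.
have inG t : t \in T -> t \notin R -> t \in [seq t <- T | t \notin R].
  by move=> tT tR; rewrite mem_filter tR.
case: (boolP (u \in R)) => uR; case: (boolP (v \in R)) => vR.
- by case/orP: (chR u v uR vR) => [/gcdn_idPl|/gcdn_idPr] ->; rewrite RT.
- by rewrite (gcdn_idPl (RG u v uR (inG v vT vR))).
- by rewrite (gcdn_idPr (RG v u vR (inG u uT uR))).
- by have := Gcl u v (inG u uT uR) (inG v vT vR); rewrite mem_filter => /andP[].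
Qed.

Definition proper_divs (S : seq nat) a := [seq y <- S | (y %| a) && (y != a)].

Definition dvd_maxima (Y : seq nat) :=
  [seq y <- Y | all (fun z => (y %| z) ==> (y == z)) Y].

Lemma dvd_maxima_sub Y : {subset dvd_maxima Y <= Y}.
Proof. by move=> m; rewrite mem_filter => /andP[]. Qed.

Lemma dvd_maxima_antichain Y u v : u \in dvd_maxima Y -> v \in Y -> u %| v -> u = v.
Proof. by rewrite mem_filter => /andP[/allP uY _] /uY/implyP uv /uv/eqP. Qed.

Lemma dvd_maxima_cover Y y :
  (forall t, t \in Y -> 0 < t) -> y \in Y -> exists2 m, m \in dvd_maxima Y & y %| m.
Proof.
move=> Ypos yY; set m := seqmax [seq z <- Y | y %| z].
have yY' : y \in [seq z <- Y | y %| z] by rewrite mem_filter dvdnn.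
have : m \in [seq z <- Y | y %| z] by apply: seqmax_mem; apply/eqP => Y0; rewrite Y0 in yY'.
rewrite mem_filter => /andP[ym mY]; exists m => //.
rewrite mem_filter mY andbT; apply/allP => z zY; apply/implyP => mz.
apply/eqP/anti_leq; rewrite (dvdn_leq (Ypos z zY) mz) /= /m leq_seqmax //.
by rewrite mem_filter zY (dvdn_trans ym mz).
Qed.

Lemma gcd_closed_proper_divs G a : gcd_closed G -> gcd_closed (proper_divs G a).
Proof.
move=> Gcl u v; rewrite !mem_filter => /andP[/andP[ua ua'] uG] /andP[_ vG].
rewrite Gcl // (dvdn_trans (dvdn_gcdl u v) ua) andbT /=.
by apply: contraNneq ua' => ga; rewrite eqn_dvd ua -ga dvdn_gcdl.
Qed.

Lemma dvd_maxima_proper_divs_small S R a :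
  uniq S -> divisor_chain R ->
  (forall u v, u \in R -> v \in [seq t <- S | t \notin R] -> u %| v) ->
  gcd_closed [seq t <- S | t \notin R] -> a \in S ->
  1 < size (dvd_maxima (proper_divs S a)) ->
  exists D, [/\ uniq D, size D < size [seq t <- S | t \notin R],
    {subset dvd_maxima (proper_divs S a) <= D} & gcd_closed D].
Proof.
set G := [seq t <- S | t \notin R]; set M := dvd_maxima (proper_divs S a).
move=> uS chR RG Gcl aS sM.
have MP m : m \in M -> [/\ m \in S, m %| a & m != a].
  by move/dvd_maxima_sub; rewrite mem_filter => /andP[/andP[]].
have Manti u v : u \in M -> v \in M -> u %| v -> u = v.
  by move=> uM /dvd_maxima_sub; apply: dvd_maxima_antichain.
have inG t : t \in S -> t \notin R -> t \in G by move=> tS tR; rewrite mem_filter tR.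
have MG m : m \in M -> m \in G.
  move=> mM; have [mS _ _] := MP m mM; rewrite inG //; apply/negP => mR.
  have [m' m'M m'm] : exists2 m', m' \in M & m' != m.
    apply/hasP; apply: contraTT sM => /hasPn Mm; rewrite -leqNgt.
    apply: (@uniq_leq_size _ _ [:: m]); first by rewrite !filter_uniq.
    by move=> t tM; have := Mm t tM; rewrite /= negbK inE.
  have [m'S _ _] := MP m' m'M; move/eqP: m'm; apply.
  have [m'R | m'R] := boolP (m' \in R).
    by case/orP: (chR m m' mR m'R) => [/(Manti m m' mM m'M)|/(Manti m' m m'M mM)] ->.
  by rewrite (Manti m m') // RG // inG.
have [m0 m0M] : exists m0, m0 \in M by exists (nth 0 M 0); rewrite mem_nth // ltnW.
have aG : a \in G.
  rewrite inG //; apply/negP => aR; have [_ m0a m0a'] := MP m0 m0M.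
  by move: m0a'; rewrite eqn_dvd m0a RG // MG.
exists (proper_divs G a); split.
- by rewrite !filter_uniq.
- rewrite size_filter -(count_predC (fun y => (y %| a) && (y != a)) G) -addn1.
  by rewrite leq_add2l -has_count; apply/hasP; exists a; rewrite //= eqxx andbF.
- by move=> m mM; have [_ ma ma'] := MP m mM; rewrite mem_filter ma ma' MG.
- exact: gcd_closed_proper_divs.
Qed.

Lemma gcd_closed_incomparable P x y :
  gcd_closed P -> x \in P -> y \in P -> ~~ (x %| y) -> ~~ (y %| x) ->
  uniq [:: x; y; gcdn x y] /\ {subset [:: x; y; gcdn x y] <= P}.
Proof.
move=> Pcl xP yP xy yx; split.
  have xy' : x != y by apply: contraNneq xy => ->; apply: dvdnn.
  have xg : x != gcdn x y by apply: contraNneq xy => ->; apply: dvdn_gcdr.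
  have yg : y != gcdn x y by apply: contraNneq yx => ->; apply: dvdn_gcdl.
  by rewrite /= !inE negb_or xy' xg yg.
by move=> t; rewrite !inE => /or3P[]/eqP->; rewrite // Pcl.
Qed.

Lemma gcd_closed_size2_chain P : gcd_closed P -> uniq P -> size P <= 2 -> divisor_chain P.
Proof.
move=> Pcl uP sP x y xP yP; apply: contraT => /norP[xy yx].
have [u3 sub3] := gcd_closed_incomparable Pcl xP yP xy yx.
by have := uniq_leq_size u3 sub3; rewrite /=; lia.
Qed.

Lemma gcd_closed_size3_comparable P x y z :
  gcd_closed P -> uniq P -> size P <= 3 -> x \in P -> y \in P -> z \in P ->
  [|| (x %| y) || (y %| x), (x %| z) || (z %| x) | (y %| z) || (z %| y)].
Proof.
move=> Pcl uP sP xP yP zP; apply: contraT => /norP[/norP[xy yx] /norP[/norP[xz zx] /norP[yz zy]]].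
have [u3 sub3] := gcd_closed_incomparable Pcl xP yP xy yx.
have : uniq [:: z; x; y; gcdn x y].
  rewrite cons_uniq u3 andbT !inE !negb_or; apply/and3P; split.
  - by apply: contraNneq zx => ->.
  - by apply: contraNneq zy => ->.
  - by apply: contraNneq zx => ->; rewrite dvdn_gcdl.
move/uniq_leq_size => /(_ P) h4.
have : 4 <= size P by apply: h4 => t; rewrite inE => /predU1P[->|/sub3].
lia.
Qed.

Definition dvd_antichain (M : seq nat) : Prop :=
  forall u v, u \in M -> v \in M -> u %| v -> u = v.

Lemma dvd_antichain_sub M M' : {subset M <= M'} -> dvd_antichain M' -> dvd_antichain M.
Proof. by move=> sub anti u v /sub uM /sub vM; apply: anti. Qed.

Lemma dvd_antichain_gcd_hull D M :
  uniq D -> gcd_closed D -> uniq M -> {subset M <= D} -> dvd_antichain M ->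
  exists P, [/\ uniq P, gcd_closed P, size P + size M <= size D
    & forall u v, u \in M -> v \in M -> u != v -> gcdn u v \in P].
Proof.
move=> uD Dcl uM MD Manti.
exists [seq d <- D | 1 < count (dvdn d) M]; split.
- exact: filter_uniq.
- move=> u v; rewrite !mem_filter => /andP[u2 uD'] /andP[_ vD'].
  rewrite Dcl // andbT (leq_trans u2) //.
  by apply: sub_count => m /= /(dvdn_trans (dvdn_gcdl u v)).
- have notM d : 1 < count (dvdn d) M -> d \notin M.
    apply: contraTN => dM; rewrite -leqNgt.
    rewrite (@eq_in_count _ _ (pred1 d)) ?count_uniq_mem ?dM //.
    by move=> m mM /=; apply/idP/eqP => [/(Manti d m dM mM) ->|->].
  rewrite -(count_predC (mem M) D) addnC; apply: leq_add.
  + by rewrite -size_filter uniq_leq_size // => m mM; rewrite mem_filter MD // andbT.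
  + rewrite -size_filter uniq_leq_size ?filter_uniq // => d.
    by rewrite !mem_filter => /andP[/notM dM ->]; rewrite andbT.
- move=> u v uM' vM uv; rewrite mem_filter Dcl ?MD // andbT -size_filter.
  have : uniq [:: u; v] by rewrite /= inE uv.
  move/uniq_leq_size => /(_ [seq m <- M | gcdn u v %| m]); apply => t.
  by rewrite !inE mem_filter => /orP[]/eqP->; rewrite (dvdn_gcdl, dvdn_gcdr).
Qed.

Fixpoint gcd_chain_ordered (Y : seq nat) : Prop :=
  if Y is y :: Y' then divisor_chain [seq gcdn y t | t <- Y'] /\ gcd_chain_ordered Y'
  else True.

Lemma gcd_chain_ordered2 y p : gcd_chain_ordered [:: y; p].
Proof. by do !split=> //; apply: divisor_chain1. Qed.

Lemma gcd_chain_ordered3 y p q :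
  (gcdn y p %| gcdn y q) || (gcdn y q %| gcdn y p) -> gcd_chain_ordered [:: y; p; q].
Proof. by move=> cmp; split; [apply: divisor_chain_pair | apply: gcd_chain_ordered2]. Qed.

Lemma gcd_chain_ordered_of_chain (M P : seq nat) :
  divisor_chain P -> (forall u v, u \in M -> v \in M -> u != v -> gcdn u v \in P) ->
  forall Y, uniq Y -> {subset Y <= M} -> gcd_chain_ordered Y.
Proof.
move=> chP MP; elim=> [|y Y IH] //= /andP[yY uY] YM; split; last first.
  by apply: IH => // t tY; apply: YM; rewrite inE tY orbT.
apply: divisor_chain_sub chP => _ /mapP[t tY ->]; apply: MP.
- exact: YM (mem_head _ _).
- by apply: YM; rewrite inE tY orbT.
- by apply: contraNneq yY => ->.
Qed.

Lemma gcd_chain_ordered_perm3 P m1 m2 m3 :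
  gcd_closed P -> uniq P -> size P <= 3 ->
  gcdn m1 m2 \in P -> gcdn m1 m3 \in P -> gcdn m2 m3 \in P ->
  exists2 Y, perm_eq Y [:: m1; m2; m3] & gcd_chain_ordered Y.
Proof.
move=> Pcl uP sP g12 g13 g23.
case/or3P: (gcd_closed_size3_comparable Pcl uP sP g12 g13 g23) => cmp.
- by exists [:: m1; m2; m3]; last exact: gcd_chain_ordered3.
- exists [:: m2; m1; m3]; first by apply/permP => f /=; lia.
  by apply: gcd_chain_ordered3; rewrite gcdnC.
- exists [:: m3; m1; m2]; first by apply/permP => f /=; lia.
  by apply: gcd_chain_ordered3; rewrite gcdnC [gcdn m3 m2]gcdnC.
Qed.

Lemma gcd_closed_least_multiple_unique S d u v :
  gcd_closed S -> u \in S -> v \in S -> d %| u -> d %| v ->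
  ~~ has (dvdn d) (proper_divs S u) -> ~~ has (dvdn d) (proper_divs S v) -> u = v.
Proof.
move=> Scl uS vS du dv nu nv.
have dg : d %| gcdn u v by rewrite dvdn_gcd du.
have gu : gcdn u v = u.
  apply/eqP; apply: contraNT nu => gu; apply/hasP; exists (gcdn u v) => //.
  by rewrite mem_filter dvdn_gcdl gu Scl.
have gv : gcdn u v = v.
  apply/eqP; apply: contraNT nv => gv; apply/hasP; exists (gcdn u v) => //.
  by rewrite mem_filter dvdn_gcdr gv Scl.
by rewrite -gu gv.
Qed.

(** * The Moebius inversion of 1/z and the defect of a set of divisors *)

Local Open Scope ring_scope.

(* g_recip is the arithmetic function with divisor sums \sum_(d %| z) g_recip d = 1/z;
   any fuel f > z computes it. *)
Fixpoint g_recip_fuel (f z : nat) : rat :=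
  if f is f'.+1 then z%:R^-1 - \sum_(1 <= d < z | (d %| z)%N) g_recip_fuel f' d else 0.

Lemma g_recip_fuel_stable f f' z : (z < f)%N -> (z < f')%N -> g_recip_fuel f z = g_recip_fuel f' z.
Proof.
elim: f f' z => [|f IH] [|f'] z //= zf zf'.
congr (_ - _); rewrite big_nat_cond [RHS]big_nat_cond.
by apply: eq_bigr => d /andP[/andP[_ dz] _]; apply: IH; lia.
Qed.

Definition g_recip (z : nat) : rat := g_recip_fuel z.+1 z.

Lemma g_recipE z : g_recip z = z%:R^-1 - \sum_(1 <= d < z | (d %| z)%N) g_recip d.
Proof.
rewrite [g_recip z]/g_recip [g_recip_fuel _ _]/=; congr (_ - _).
rewrite big_nat_cond [RHS]big_nat_cond.
by apply: eq_bigr => d /andP[/andP[_ dz] _]; apply: g_recip_fuel_stable.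
Qed.

Lemma sum_g_recip_dvd N z : (0 < z)%N -> (z < N)%N ->
  \sum_(1 <= d < N | (d %| z)%N) g_recip d = z%:R^-1.
Proof.
move=> z0 zN; rewrite (big_cat_nat (n := z.+1)) //= [X in _ + X]big_nat_cond.
rewrite [X in _ + X]big1 => [|d /andP[/andP[zd _] /(dvdn_leq z0)]]; last by rewrite leqNgt zd.
by rewrite addr0 big_mkcond big_nat_recr //= dvdnn -big_mkcond [g_recip z]g_recipE addrC subrK.
Qed.

Lemma big_predU (V : zmodType) (I : Type) (r : seq I) (P Q : pred I) (F : I -> V) :
  \sum_(i <- r | P i || Q i) F i =
  \sum_(i <- r | P i) F i + \sum_(i <- r | Q i) F i - \sum_(i <- r | P i && Q i) F i.
Proof.
rewrite (bigID P) [\sum_(i <- r | Q i) _](bigID P) /=.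
have -> : \sum_(i <- r | (P i || Q i) && P i) F i = \sum_(i <- r | P i) F i.
  by apply: eq_bigl => i; case: (P i); rewrite ?andbF.
have -> : \sum_(i <- r | (P i || Q i) && ~~ P i) F i = \sum_(i <- r | Q i && ~~ P i) F i.
  by apply: eq_bigl => i; case: (P i); rewrite ?andbF.
have -> : \sum_(i <- r | Q i && P i) F i = \sum_(i <- r | P i && Q i) F i.
  by apply: eq_bigl => i; apply: andbC.
by rewrite [\sum_(i <- r | P i && Q i) _ + _]addrC addrA addrK.
Qed.

Lemma invn_lt (m n : nat) : (0 < m)%N -> (m < n)%N -> n%:R^-1 < m%:R^-1 :> rat.
Proof. by move=> m0 mn; rewrite ltf_pV2 ?posrE ?ltr0n ?ltr_nat // (ltn_trans m0). Qed.

Lemma triangular_sum_eq0 (V : nmodType) (I : finType) (r : rel I) (rank : I -> nat)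
    (c : I -> V) :
  (forall j, r j j) -> (forall k j, r k j -> k != j -> (rank k < rank j)%N) ->
  (forall j, \sum_(k | r k j) c k = 0) -> forall j, c j = 0.
Proof.
move=> rrefl rrank csum.
suff rank_ind m j : (rank j < m)%N -> c j = 0 by move=> j; apply: (rank_ind (rank j).+1).
elim: m j => // m IH j jm; have := csum j; rewrite (bigD1 j) //= big1 ?addr0 //.
by move=> k /andP[kj k'j]; apply: IH; apply: leq_trans (rrank k j kj k'j) jm.
Qed.

Section Cover.

(* N bounds every integer in sight, so that sums over 1 <= d < N range over all the
   divisors that matter. *)
Variable N : nat.

Definition cover (Y : seq nat) : rat := \sum_(1 <= d < N | has (dvdn d) Y) g_recip d.

Lemma eq_cover Y Y' :
  (forall d, (0 < d)%N -> has (dvdn d) Y = has (dvdn d) Y') -> cover Y = cover Y'.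
Proof.
move=> YY'; rewrite /cover big_nat_cond [RHS]big_nat_cond.
by apply: eq_bigl => -[|d] //=; rewrite YY'.
Qed.

Lemma cover_nil : cover [::] = 0.
Proof. by rewrite /cover big_pred0. Qed.

Lemma cover1 y : (0 < y)%N -> (y < N)%N -> cover [:: y] = y%:R^-1.
Proof.
by move=> y0 yN; rewrite -(sum_g_recip_dvd y0 yN); apply: eq_bigl => d /=; rewrite orbF.
Qed.

Lemma cover_cons y Y : cover (y :: Y) = cover [:: y] + cover Y - cover [seq gcdn y t | t <- Y].
Proof.
have -> : cover [seq gcdn y t | t <- Y] =
    \sum_(1 <= d < N | has (dvdn d) [:: y] && has (dvdn d) Y) g_recip d.
  apply: eq_bigl => d; rewrite /= orbF has_map.
  apply/hasP/andP => [[t tY]|[dy /hasP[t tY dt]]].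
    by rewrite /= dvdn_gcd => /andP[dy dt]; split=> //; apply/hasP; exists t.
  by exists t; rewrite //= dvdn_gcd dy.
by rewrite /cover -big_predU; apply: eq_bigl => d /=; rewrite orbF.
Qed.

Definition defect (a : nat) (Y : seq nat) : rat := a%:R^-1 - cover Y.

Lemma eq_defect a Y Y' : Y =i Y' -> defect a Y = defect a Y'.
Proof. by move=> YY'; rewrite /defect (@eq_cover Y Y') // => d _; apply: eq_has_r. Qed.

Lemma defect_pair_gt0 a y1 y2 :
  (0 < a)%N -> (0 < y1 < N)%N -> (0 < y2 < N)%N -> ~~ (y1 %| y2)%N -> ~~ (y2 %| y1)%N ->
  0 < defect a [:: y1; y2].
Proof.
move=> a0 /andP[y10 y1N] /andP[y20 y2N] y12 y21; set g := gcdn y1 y2.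
have g0 : (0 < g)%N by rewrite gcdn_gt0 y10.
have gN : (g < N)%N := leq_ltn_trans (dvdn_leq y10 (dvdn_gcdl y1 y2)) y1N.
have half y : (0 < y)%N -> (g %| y)%N -> g != y -> y%:R^-1 <= g%:R^-1 / 2 :> rat.
  move=> y0 gy gy'; rewrite -invfM -natrM muln2 lef_pV2 ?posrE ?ltr0n ?ler_nat ?double_gt0 //.
  exact: proper_dvdn_double_leq.
have h1 : y1%:R^-1 <= g%:R^-1 / 2 :> rat.
  by apply: half; rewrite ?dvdn_gcdl //; apply: contraNneq y12 => <-; apply: dvdn_gcdr.
have h2 : y2%:R^-1 <= g%:R^-1 / 2 :> rat.
  by apply: half; rewrite ?dvdn_gcdr //; apply: contraNneq y21 => <-; apply: dvdn_gcdl.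
have : 0 < a%:R^-1 :> rat by rewrite invr_gt0 ltr0n.
by rewrite /defect cover_cons /= !cover1 //; lra.
Qed.

(* The gcds of y with Y form a chain with a maximum c < y, so by inclusion-exclusion
   adding y changes the defect by 1/c - 1/y > 0. *)
Lemma defect_cons_gt0 a y Y :
  (0 < y < N)%N -> Y != [::] -> {in Y, forall t, ~~ (y %| t)%N} ->
  divisor_chain [seq gcdn y t | t <- Y] -> 0 < defect a Y -> 0 < defect a (y :: Y).
Proof.
move=> /andP[y0 yN] Y0 ndvd chG; set G := [seq gcdn y t | t <- Y] in chG *.
have Gpos u : u \in G -> (0 < u)%N by case/mapP => t _ ->; rewrite gcdn_gt0 y0.
have cG : seqmax G \in G by apply: seqmax_mem; rewrite -size_eq0 size_map size_eq0.
have c0 := Gpos _ cG.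
have cy : (seqmax G < y)%N.
  case/mapP: cG => t tY ->; rewrite ltn_neqAle dvdn_leq ?dvdn_gcdl // andbT.
  by apply: contraNneq (ndvd t tY) => <-; apply: dvdn_gcdr.
have coverG : cover G = cover [:: seqmax G].
  apply: eq_cover => d _ /=; rewrite orbF; apply/hasP/idP => [[u uG du]|dc].
    exact: dvdn_trans du (dvdn_seqmax (Gpos u uG) chG uG).
  by exists (seqmax G).
rewrite /defect cover_cons -/G coverG !cover1 ?(ltn_trans cy) //.
by have := invn_lt c0 cy; lra.
Qed.

Lemma defect_gt0_ordered a Y :
  (0 < a)%N -> uniq Y -> dvd_antichain Y -> {in Y, forall y, 0 < y < N}%N ->
  (1 < size Y)%N -> gcd_chain_ordered Y -> 0 < defect a Y.
Proof.
move=> a0; elim: Y => [|y Y IH] // /andP[yY uY] anti Ybnd sY [chG ordY].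
have inY t : t \in Y -> t \in y :: Y by move=> tY; rewrite inE tY orbT.
have ndvd : {in Y, forall t, ~~ (y %| t)%N}.
  by move=> t tY; apply: contraNN yY => /(anti y t (mem_head _ _) (inY t tY)) ->.
have yb := Ybnd y (mem_head _ _).
case: Y => [|t [|t' Y]] // in IH yY uY sY chG ordY anti Ybnd ndvd inY *.
  apply: (defect_pair_gt0 a0 yb (Ybnd t (inY t (mem_head _ _))) (ndvd t (mem_head _ _))).
  by apply: contraNN yY => /(anti t y (inY t (mem_head _ _)) (mem_head _ _)) <-; apply: mem_head.
apply: defect_cons_gt0 => //; apply: IH => //.
- by apply: dvd_antichain_sub anti => u /inY.
- by move=> u /inY; apply: Ybnd.
Qed.

Lemma defect_dvd_antichain_gt0 a M D :
  (0 < a < N)%N -> uniq M -> dvd_antichain M -> {in M, forall m, m %| a}%N ->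
  (1 < size M)%N -> uniq D -> gcd_closed D -> {subset M <= D} -> (size D <= 6)%N ->
  0 < defect a M.
Proof.
move=> /andP[a0 aN] uM anti Ma sM uD Dcl MD sD.
have Mbnd : {in M, forall m, 0 < m < N}%N.
  move=> m mM; have ma := Ma m mM; rewrite (leq_ltn_trans (dvdn_leq a0 ma) aN) andbT.
  by rewrite lt0n; apply: contraTneq ma => ->; rewrite dvd0n -lt0n a0.
have [P [uP Pcl sPM gP]] := dvd_antichain_gcd_hull uD Dcl uM MD anti.
have [Y MY ordY] : exists2 Y, perm_eq Y M & gcd_chain_ordered Y.
  have [M4|M3] := leqP 4 (size M).
    have sP : (size P <= 2)%N by have := leq_trans sPM sD; lia.
    by exists M => //; apply: (gcd_chain_ordered_of_chain (gcd_closed_size2_chain Pcl uP sP) gP).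
  case: M => [|m1 [|m2 [|m3 [|m4 M]]]] // in uM anti Ma MD Mbnd sM M3 gP sPM *.
    by exists [:: m1; m2]; last exact: gcd_chain_ordered2.
  move: uM; rewrite /= !inE !negb_or andbT => /andP[/andP[m12 m13] m23].
  apply: (gcd_chain_ordered_perm3 Pcl uP); rewrite ?gP ?inE ?eqxx ?orbT //.
  by have /= := leq_trans sPM sD; lia.
rewrite -(eq_defect a (perm_mem MY)); apply: defect_gt0_ordered => //.
- by rewrite (perm_uniq MY).
- by apply: dvd_antichain_sub anti => u; rewrite (perm_mem MY).
- by move=> u; rewrite (perm_mem MY); apply: Mbnd.
- by rewrite (perm_size MY).
Qed.

(* The diagonal factor: 1/gcd(x_i, x_j) = \sum_(x_k %| gcd(x_i, x_j)) alpha(x_k). *)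
Definition alpha (S : seq nat) (a : nat) : rat :=
  \sum_(1 <= d < N | (d %| a)%N && ~~ has (dvdn d) (proper_divs S a)) g_recip d.

Lemma alpha_defect S a : (0 < a < N)%N -> {in S, forall t, 0 < t}%N ->
  alpha S a = defect a (dvd_maxima (proper_divs S a)).
Proof.
move=> /andP[a0 aN] Spos; set M := dvd_maxima _.
have coverM :
    cover M = \sum_(1 <= d < N | (d %| a)%N && has (dvdn d) (proper_divs S a)) g_recip d.
  apply: eq_bigl => d; apply/hasP/andP => [[m mM dm]|[da /hasP[y yS dy]]].
    have := dvd_maxima_sub mM; rewrite mem_filter => /andP[/andP[ma _] _].
    by split; [apply: dvdn_trans dm ma | apply/hasP; exists m; first exact: dvd_maxima_sub].
  have [|m mM ym] := dvd_maxima_cover _ yS; last by exists m; last exact: dvdn_trans dy ym.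
  by move=> t; rewrite mem_filter => /andP[_ /Spos].
rewrite /alpha /defect coverM -(sum_g_recip_dvd a0 aN).
by rewrite [X in _ = X - _](bigID (fun d => has (dvdn d) (proper_divs S a))) addrAC subrr add0r.
Qed.

Lemma alpha_neq0 S a : {in S, forall t, 0 < t}%N -> uniq S -> (0 < a < N)%N ->
  ((1 < size (dvd_maxima (proper_divs S a)))%N ->
    exists D, [/\ uniq D, (size D <= 6)%N, {subset dvd_maxima (proper_divs S a) <= D}
      & gcd_closed D]) ->
  alpha S a != 0.
Proof.
move=> Spos uS /andP[a0 aN] smallD; rewrite alpha_defect ?a0 //.
set M := dvd_maxima _ in smallD *.
have MP m : m \in M -> (m %| a)%N && (m != a) by move/dvd_maxima_sub; rewrite mem_filter => /andP[].
case eM: M => [|m [|m' M']].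
- by rewrite /defect cover_nil subr0 invr_eq0 pnatr_eq0 -lt0n.
- have /MP/andP[ma ma'] : m \in M by rewrite eM mem_head.
  have ltma : (m < a)%N by rewrite ltn_neqAle ma' dvdn_leq.
  have m0 : (0 < m)%N by rewrite lt0n; apply: contraTneq ma => ->; rewrite dvd0n -lt0n.
  rewrite /defect cover1 ?(ltn_trans ltma) //.
  by rewrite subr_eq0 (lt_eqF (invn_lt m0 ltma)).
- rewrite -eM; apply: lt0r_neq0; have [|D [uD sD MD Dcl]] := smallD; first by rewrite eM.
  apply: (defect_dvd_antichain_gt0 (D := D)) => //; first by rewrite a0.
  + by rewrite !filter_uniq.
  + by move=> u v uM /dvd_maxima_sub; apply: dvd_maxima_antichain.
  + by move=> u /MP /andP[].
  + by rewrite eM.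
Qed.

Lemma sum_alpha_dvd (I : finType) (x : I -> nat) l :
  injective x -> (forall i, 0 < x i < N)%N -> gcd_closed (codom x) ->
  \sum_(k | (x k %| x l)%N) alpha (codom x) (x k) = (x l)%:R^-1.
Proof.
move=> inj xb Scl; have /andP[xl0 xlN] := xb l.
rewrite -(sum_g_recip_dvd xl0 xlN) /alpha.
under eq_bigr => k _ do rewrite big_mkcond.
rewrite exchange_big [RHS]big_mkcond; apply: eq_big_nat => d _; rewrite -big_mkcondr /=.
have [dl|ndl] := boolP (d %| x l)%N; last first.
  by apply: big1 => k /andP[kl /andP[dk _]]; move: ndl; rewrite (dvdn_trans dk kl).
case: (@arg_minnP _ l (fun k => (x k %| x l) && (d %| x k))%N x); first by rewrite dvdnn dl.
move=> k0 /andP[k0l dk0] k0min.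
have nk0 : ~~ has (dvdn d) (proper_divs (codom x) (x k0)).
  apply/hasP => -[y]; rewrite mem_filter => /andP[/andP[yk0 yk0'] /codomP[t yt]] dt.
  subst y; have := k0min t; rewrite (dvdn_trans yk0 k0l) dt => /(_ isT).
  by have := dvdn_leq (proj1 (andP (xb k0))) yk0; rewrite leq_eqVlt (negbTE yk0') /=; lia.
rewrite (big_pred1 k0) ?dk0 ?nk0 // => k /=; apply/idP/eqP => [/and3P[_ dk nk]|-> //].
  by apply: inj; apply: (gcd_closed_least_multiple_unique Scl _ _ dk dk0 nk nk0); apply: codom_f.
by rewrite k0l dk0.
Qed.

Lemma recip_gcd_kernel (I : finType) (x : I -> nat) (w : I -> rat) :
  injective x -> (forall i, 0 < x i < N)%N -> gcd_closed (codom x) ->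
  (forall i, alpha (codom x) (x i) != 0) ->
  (forall j, \sum_i w i * (gcdn (x i) (x j))%:R^-1 = 0) -> forall i, w i = 0.
Proof.
move=> inj xb Scl alpha_nz hw.
(* Substituting sum_alpha_dvd leaves two triangular systems: one for alpha * W, one for w. *)
pose W k := \sum_(i | (x k %| x i)%N) w i.
have lt_proper k j : (x k %| x j)%N -> k != j -> (x k < x j)%N.
  move=> kj k'j; rewrite ltn_neqAle (inj_eq inj) k'j dvdn_leq //.
  by have /andP[] := xb j.
have expand j : \sum_i w i * (gcdn (x i) (x j))%:R^-1 =
    \sum_(k | (x k %| x j)%N) alpha (codom x) (x k) * W k.
  transitivity (\sum_i \sum_(k | (x k %| x j)%N)
      (if (x k %| x i)%N then alpha (codom x) (x k) * w i else 0)).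
    apply: eq_bigr => i _; have /codomP[l gl] := Scl _ _ (codom_f x i) (codom_f x j).
    rewrite gl -(sum_alpha_dvd l inj xb Scl) big_distrr big_mkcond [RHS]big_mkcond.
    apply: eq_bigr => k _; rewrite -gl dvdn_gcd.
    by case: (x k %| x i)%N; case: (x k %| x j)%N; rewrite //= mulrC.
  rewrite exchange_big /=; apply: eq_bigr => k _.
  by rewrite /W big_distrr /= [RHS]big_mkcond.
have W0 k : W k = 0.
  have := triangular_sum_eq0 (r := fun k j => (x k %| x j)%N) (rank := x)
    (c := fun k => alpha (codom x) (x k) * W k).
  move=> /(_ (fun j => dvdnn _) lt_proper (fun j => etrans (esym (expand j)) (hw j)) k).
  by move/eqP; rewrite mulf_eq0 (negbTE (alpha_nz k)) => /eqP.
apply: (triangular_sum_eq0 (r := fun i k => (x k %| x i)%N) (rank := fun i => (N - x i)%N)).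
- by move=> k; apply: dvdnn.
- move=> i k ki ik; have := lt_proper k i ki; rewrite eq_sym => /(_ ik).
  by have := xb i; lia.
- exact: W0.
Qed.

End Cover.

(** * Nonsingularity of the LCM matrix *)

Lemma natr_lcmn a b : (0 < a)%N -> (lcmn a b)%:R = a%:R * b%:R / (gcdn a b)%:R :> rat.
Proof.
move=> a0; have g0 : (gcdn a b)%:R != 0 :> rat by rewrite pnatr_eq0 -lt0n gcdn_gt0 a0.
by rewrite -natrM -muln_lcm_gcd natrM mulfK.
Qed.

Lemma det_lcm_matrix_neq0 n (x : 'I_n -> nat) N :
  injective x -> (forall i, 0 < x i < N)%N -> gcd_closed (codom x) ->
  (forall i, alpha N (codom x) (x i) != 0) -> \det (lcm_matrix x) != 0.
Proof.
move=> inj xb Scl alpha_nz; apply/det0P => -[v v0 vA].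
have xnz i : (x i)%:R != 0 :> rat by rewrite pnatr_eq0 -lt0n; case/andP: (xb i).
have w0 : forall i, v ord0 i * (x i)%:R = 0.
  apply: (recip_gcd_kernel (w := fun i => v ord0 i * (x i)%:R) inj xb Scl alpha_nz) => j.
  apply: (mulIf (xnz j)); rewrite mul0r big_distrl /=.
  have := congr1 (fun A : 'rV_n => A ord0 j) vA; rewrite !mxE => vAj.
  rewrite -[X in _ = X]vAj.
  apply: eq_bigr => i _; rewrite mxE natr_lcmn; last by case/andP: (xb i).
  by rewrite !mulrA mulrAC.
case/negP: v0; apply/eqP/rowP => i; rewrite mxE.
by have /eqP := w0 i; rewrite mulf_eq0 (negbTE (xnz i)) orbF => /eqP.
Qed.

Local Close Scope ring_scope.

Theorem corollary4p5 (n : nat) (x : 'I_n -> nat) :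
  8 <= n ->
  injective x ->
  (forall i, 0 < x i) ->
  r_fold_gcd_closed (n - 7) [seq x i | i <- enum 'I_n] ->
  (\det (lcm_matrix x) != 0)%R.
Proof.
move=> n8 inj xpos; rewrite -codomE => rfold.
have Spos : {in codom x, forall t, 0 < t} by move=> _ /codomP[i ->].
have uS : uniq (codom x) by rewrite codomE map_inj_uniq ?enum_uniq.
have [R [RS sG chR Gcl RG]] := r_fold_gcd_closed_split Spos rfold.
have Scl := gcd_closed_chain_below RS chR Gcl RG.
pose N := (\max_i x i).+1.
have xb i : 0 < x i < N by rewrite xpos ltnS leq_bigmax.
apply: (det_lcm_matrix_neq0 inj xb Scl) => i.
apply: alpha_neq0 => //= M2.
have [D [uD sD MD Dcl]] := dvd_maxima_proper_divs_small uS chR RG Gcl (codom_f x i) M2.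
exists D; split => //.
have := leq_trans (leq_add sD (leqnn (n - 7))) sG.
by rewrite size_codom card_ord; set s := size D; lia.
Qed.
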